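(* Let $R=\mathbb{Z}[a]$ and $\Gamma$ be as below. For left $\Gamma$-modules $M,N$, the $R$-module $M\otimes_R N$ carries a well-defined left $\Gamma$-module structure extending its $R$-module structure, determined by \begin{align*} Q_0(x\otimes y) &= Q_0x\otimes Q_0y + 2\,Q_1x\otimes Q_2y+2\,Q_2x\otimes Q_1y,\\ Q_1(x\otimes y) &= Q_0x\otimes Q_1y + Q_1x\otimes Q_0y + a\,Q_1x\otimes Q_2y +a\, Q_2x\otimes Q_1y +2\, Q_2x\otimes Q_2y,\\ Q_2(x\otimes y) &= Q_0x\otimes Q_2y+Q_2x\otimes Q_0y+Q_1x\otimes Q_1y + a\, Q_2x\otimes Q_2y. \end{align*} With this tensor product and unit object $R$ (with its standard $\Gamma$-module structure, given by the $R$-module structure of $R$ together with $Q_0\cdot 1=1$, $Q_1\cdot 1=0$, $Q_2\cdot 1=0$), the category of left $\Gamma$-modules is a symmetric monoidal category. Moreover, for the element $\Psi = Q_0Q_0 +a\,Q_0Q_1 -2\,Q_1Q_1 +a^2\,Q_0Q_2 -2a\,Q_1Q_2 +4\,Q_2Q_2$ one has $\Psi(x\otimes y)=\Psi x\otimes \Psi y$ for all $x\in M$, $y\in N$.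
   Context: $R=\mathbb{Z}[a]$ is a polynomial ring. $\Gamma$ is the associative ring equipped with a ring homomorphism $\eta\colon R\to\Gamma$, generated over $R$ by $Q_0,Q_1,Q_2$ subject to: (i) commutation relations: the $Q_i$ commute with elements of $\mathbb{Z}\subset R$, and $Q_0\,a = a^2Q_0-2aQ_1+6Q_2$, $Q_1\,a=3Q_0+aQ_2$, $Q_2\,a=-aQ_0+3Q_1$; (ii) adem relations: $Q_1Q_0=2Q_2Q_1-2Q_0Q_2$ and $Q_2Q_0=Q_0Q_1+aQ_0Q_2-2Q_1Q_2$. A $\Gamma$-module means a left $\Gamma$-module; it is an $R$-module via $\eta$. The standard $\Gamma$-module structure on $R$ is the unique one extending the $R$-module structure of $R$ with $Q_0\cdot1=1$, $Q_1\cdot 1=Q_2\cdot 1=0$. *)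

From HB Require Import structures.
From mathcomp Require Import all_boot all_order all_algebra.
Set Implicit Arguments. Unset Strict Implicit. Unset Printing Implicit Defensive.
Import GRing.Theory.
Local Open Scope ring_scope.

Definition Rg : comNzRingType := {poly int}.
Definition aR : Rg := 'X.

Definition Rlin (U V : lmodType Rg) (f : U -> V) : Prop :=
  forall (r : Rg) (u v : U), f (r *: u + v) = r *: f u + f v.

Definition Rbilin (M N P : lmodType Rg) (b : M -> N -> P) : Prop :=
  (forall x x' y, b (x + x') y = b x y + b x' y) /\
  (forall x y y', b x (y + y') = b x y + b x y') /\
  (forall (r : Rg) x y, b (r *: x) y = r *: b x y) /\
  (forall (r : Rg) x y, b x (r *: y) = r *: b x y).

Definition is_tensor (M N T : lmodType Rg) (t : M -> N -> T) : Prop :=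
  Rbilin t /\
  forall (P : lmodType Rg) (b : M -> N -> P), Rbilin b ->
    exists! f : T -> P, Rlin f /\ forall x y, f (t x y) = b x y.

(* A left Gamma-module structure on an R-module M: the action of the
   generators Q0, Q1, Q2 (additive, hence commuting with Z), subject to the
   commutation relations with a and the Adem relations.  This is exactly a
   left module over Gamma = R<Q0,Q1,Q2>/(relations) extending the R-action. *)
Record gstr (M : lmodType Rg) := GStr {
  Q0 : M -> M;
  Q1 : M -> M;
  Q2 : M -> M;
  Q0D : forall x y, Q0 (x + y) = Q0 x + Q0 y;
  Q1D : forall x y, Q1 (x + y) = Q1 x + Q1 y;
  Q2D : forall x y, Q2 (x + y) = Q2 x + Q2 y;
  Q0a : forall m, Q0 (aR *: m) = aR ^+ 2 *: Q0 m - (aR *: Q1 m) *+ 2 + Q2 m *+ 6;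
  Q1a : forall m, Q1 (aR *: m) = Q0 m *+ 3 + aR *: Q2 m;
  Q2a : forall m, Q2 (aR *: m) = - (aR *: Q0 m) + Q1 m *+ 3;
  adem1 : forall m, Q1 (Q0 m) = Q2 (Q1 m) *+ 2 - Q0 (Q2 m) *+ 2;
  adem2 : forall m, Q2 (Q0 m) = Q0 (Q1 m) + aR *: Q0 (Q2 m) - Q1 (Q2 m) *+ 2
}.

Definition gmap (M N : lmodType Rg) (sM : gstr M) (sN : gstr N) (f : M -> N) :=
  Rlin f /\
  forall m, [/\ f (Q0 sM m) = Q0 sN (f m),
                f (Q1 sM m) = Q1 sN (f m) &
                f (Q2 sM m) = Q2 sN (f m)].

Definition same_gstr (M : lmodType Rg) (s s' : gstr M) : Prop :=
  forall m, [/\ Q0 s m = Q0 s' m, Q1 s m = Q1 s' m & Q2 s m = Q2 s' m].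

Definition tensor_gstr (M N T : lmodType Rg) (sM : gstr M) (sN : gstr N)
    (sT : gstr T) (t : M -> N -> T) : Prop :=
  forall x y,
  [/\ Q0 sT (t x y) = t (Q0 sM x) (Q0 sN y) + t (Q1 sM x) (Q2 sN y) *+ 2
                      + t (Q2 sM x) (Q1 sN y) *+ 2,
      Q1 sT (t x y) = t (Q0 sM x) (Q1 sN y) + t (Q1 sM x) (Q0 sN y)
                      + aR *: t (Q1 sM x) (Q2 sN y) + aR *: t (Q2 sM x) (Q1 sN y)
                      + t (Q2 sM x) (Q2 sN y) *+ 2 &
      Q2 sT (t x y) = t (Q0 sM x) (Q2 sN y) + t (Q2 sM x) (Q0 sN y)
                      + t (Q1 sM x) (Q1 sN y) + aR *: t (Q2 sM x) (Q2 sN y)].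

Definition std_unit (sR : gstr Rg^o) : Prop :=
  [/\ Q0 sR (1 : Rg^o) = 1, Q1 sR (1 : Rg^o) = 0 & Q2 sR (1 : Rg^o) = 0].

Definition Psi (M : lmodType Rg) (s : gstr M) (m : M) : M :=
  Q0 s (Q0 s m) + aR *: Q0 s (Q1 s m) - Q1 s (Q1 s m) *+ 2
  + aR ^+ 2 *: Q0 s (Q2 s m) - (aR *: Q1 s (Q2 s m)) *+ 2
  + Q2 s (Q2 s m) *+ 4.

From HB Require Import structures.
From mathcomp Require Import all_boot all_order all_algebra.
From mathcomp Require Import boolp ring.
Set Implicit Arguments. Unset Strict Implicit. Unset Printing Implicit Defensive.
Import GRing.Theory.
Local Open Scope ring_scope.

(* The formulas for Q_i (x (x) y) are biadditive and balanced for multiplication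
   by a, hence for all of R = Z[a], so they descend to M (x) N through the
   R-module Hom_Z(R, -).  Every remaining identity (the commutation and Adem
   relations on M (x) N, the compatibility of the structure maps with the Q_i,
   the multiplicativity of Psi) is additive in the tensor variable, so it
   suffices to check it on pure tensors; there, after expanding with the
   relations of M and N, it becomes an identity between R-linear combinations
   of tensors Q_I x (x) Q_J y, checked coefficientwise.  The unit R gets its
   structure from the ring morphism R -> M_3(R) sending a to the matrix of the
   commutation relations. *)

Inductive lterm :=
  | LAtom of nat
  | LZero
  | LAdd of lterm & lterm
  | LOpp of lterm
  | LScale of Rg & lterm
  | LMuln of lterm & nat.

Section LinearCombinations.
Variable V : lmodType Rg.

Fixpoint lterm_eval (env : seq V) (e : lterm) : V :=
  match e with
  | LAtom n => env`_n
  | LZero => 0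
  | LAdd e1 e2 => lterm_eval env e1 + lterm_eval env e2
  | LOpp e1 => - lterm_eval env e1
  | LScale r e1 => r *: lterm_eval env e1
  | LMuln e1 n => lterm_eval env e1 *+ n
  end.

Fixpoint lterm_coef (e : lterm) (k : nat) : Rg :=
  match e with
  | LAtom n => (n == k)%:R
  | LZero => 0
  | LAdd e1 e2 => lterm_coef e1 k + lterm_coef e2 k
  | LOpp e1 => - lterm_coef e1 k
  | LScale r e1 => r * lterm_coef e1 k
  | LMuln e1 n => lterm_coef e1 k *+ n
  end.

Lemma lterm_evalE env e :
  lterm_eval env e = \sum_(k < size env) lterm_coef e k *: env`_k.
Proof.
elim: e => [n||e1 IH1 e2 IH2|e1 IH|r e1 IH|e1 IH n] /=.
- have [lt_n|le_n] := ltnP n (size env).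
    rewrite (bigD1 (Ordinal lt_n)) //= eqxx scale1r big1 ?addr0 // => k nk.
    have /negbTE -> : n != k by apply: contra nk => /eqP nk; apply/eqP/val_inj.
    by rewrite scale0r.
  rewrite nth_default // big1 // => k _.
  by rewrite gtn_eqF ?scale0r // (leq_trans (ltn_ord k)).
- by rewrite big1 // => k _; rewrite scale0r.
- by rewrite IH1 IH2 -big_split; apply: eq_bigr => k _; rewrite scalerDl.
- by rewrite IH -sumrN; apply: eq_bigr => k _; rewrite scaleNr.
- by rewrite IH scaler_sumr; apply: eq_bigr => k _; rewrite scalerA.
- by rewrite IH -sumrMnl; apply: eq_bigr => k _; rewrite scalerMnl.
Qed.

Lemma eq_lterm_eval env e1 e2 :
    (forall k, (k < size env)%N -> lterm_coef e1 k = lterm_coef e2 k) ->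
  lterm_eval env e1 = lterm_eval env e2.
Proof. by move=> eq_coef; rewrite !lterm_evalE; apply: eq_bigr => k _; rewrite eq_coef. Qed.

End LinearCombinations.

(* [lcomb] proves an identity between R-linear combinations of arbitrary
   atoms by comparing, with [ring], the coefficients of each atom. *)
Ltac lcomb_mem x l :=
  lazymatch l with
  | nil => constr:(false)
  | cons x _ => constr:(true)
  | cons _ ?l' => lcomb_mem x l'
  end.
Ltac lcomb_index x l :=
  lazymatch l with
  | cons x _ => constr:(0%N)
  | cons _ ?l' => let n := lcomb_index x l' in constr:(n.+1)
  end.
Ltac lcomb_atoms e l :=
  lazymatch e with
  | ?a + ?b => let l1 := lcomb_atoms a l in lcomb_atoms b l1
  | - ?a => lcomb_atoms a l
  | _ *: ?a => lcomb_atoms a l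
  | ?a *+ _ => lcomb_atoms a l
  | 0 => l
  | _ => let b := lcomb_mem e l in
         lazymatch b with true => l | false => constr:(cons e l) end
  end.
Ltac lcomb_reify e l :=
  lazymatch e with
  | ?a + ?b => let x := lcomb_reify a l in let y := lcomb_reify b l in constr:(LAdd x y)
  | - ?a => let x := lcomb_reify a l in constr:(LOpp x)
  | ?r *: ?a => let x := lcomb_reify a l in constr:(LScale r x)
  | ?a *+ ?n => let x := lcomb_reify a l in constr:(LMuln x n)
  | 0 => constr:(LZero)
  | _ => let n := lcomb_index e l in constr:(LAtom n)
  end.
Ltac lcomb_coefs :=
  first [ move=> ?; by [] | case=> [_|]; [simpl; ring | lcomb_coefs] ].
Ltac lcomb :=
  match goal with |- @eq ?V ?l ?r =>
    let atoms := lcomb_atoms r ltac:(lcomb_atoms l (@nil V)) in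
    let el := lcomb_reify l atoms in let er := lcomb_reify r atoms in
    change (lterm_eval atoms el = lterm_eval atoms er);
    apply: eq_lterm_eval; lcomb_coefs
  end.

Section Additive.
Variables (U W : zmodType) (f : U -> W).
Hypothesis fD : forall x y, f (x + y) = f x + f y.

Lemma addf0 : f 0 = 0.
Proof. by apply: (addrI (f 0)); rewrite -fD !addr0. Qed.

Lemma addfN x : f (- x) = - f x.
Proof. by apply: (addrI (f x)); rewrite -fD !subrr addf0. Qed.

Lemma addfMn x n : f (x *+ n) = f x *+ n.
Proof. by elim: n => [|n IHn]; rewrite ?addf0 // !mulrS fD IHn. Qed.

Lemma addfMz x z : f (x *~ z) = f x *~ z.
Proof. by case: z => n; rewrite ?NegzE ?mulrNz ?addfN addfMn. Qed.

End Additive.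

Section RLinear.
Variables (U W : lmodType Rg) (f : U -> W).
Hypothesis lf : Rlin f.

Lemma RlinD u v : f (u + v) = f u + f v.
Proof. by rewrite -{1}(scale1r u) lf scale1r. Qed.

Lemma Rlin0 : f 0 = 0. Proof. exact: addf0 RlinD. Qed.
Lemma RlinN u : f (- u) = - f u. Proof. exact: (addfN RlinD u). Qed.
Lemma RlinMn u n : f (u *+ n) = f u *+ n. Proof. exact: (addfMn RlinD u n). Qed.

Lemma RlinZ r u : f (r *: u) = r *: f u.
Proof. by rewrite -[r *: u]addr0 lf Rlin0 addr0. Qed.

End RLinear.

Ltac Rlin_expand lf := rewrite ?(RlinD lf, RlinZ lf, RlinN lf, RlinMn lf, Rlin0 lf).

Section GammaAdditive.
Variables (M : lmodType Rg) (s : gstr M).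

Lemma Q00 : Q0 s 0 = 0. Proof. exact: addf0 (Q0D s). Qed.
Lemma Q10 : Q1 s 0 = 0. Proof. exact: addf0 (Q1D s). Qed.
Lemma Q20 : Q2 s 0 = 0. Proof. exact: addf0 (Q2D s). Qed.
Lemma Q0N x : Q0 s (- x) = - Q0 s x. Proof. exact: (addfN (Q0D s) x). Qed.
Lemma Q1N x : Q1 s (- x) = - Q1 s x. Proof. exact: (addfN (Q1D s) x). Qed.
Lemma Q2N x : Q2 s (- x) = - Q2 s x. Proof. exact: (addfN (Q2D s) x). Qed.
Lemma Q0Mn x n : Q0 s (x *+ n) = Q0 s x *+ n. Proof. exact: (addfMn (Q0D s) x n). Qed.
Lemma Q1Mn x n : Q1 s (x *+ n) = Q1 s x *+ n. Proof. exact: (addfMn (Q1D s) x n). Qed.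
Lemma Q2Mn x n : Q2 s (x *+ n) = Q2 s x *+ n. Proof. exact: (addfMn (Q2D s) x n). Qed.

End GammaAdditive.

Section Bilinear.
Variables (M N T : lmodType Rg) (t : M -> N -> T).
Hypothesis bt : Rbilin t.

Lemma bilinDl x x' y : t (x + x') y = t x y + t x' y. Proof. by case: bt. Qed.
Lemma bilinDr x y y' : t x (y + y') = t x y + t x y'. Proof. by case: bt => _ []. Qed.
Lemma bilinZl r x y : t (r *: x) y = r *: t x y. Proof. by case: bt => _ [_ []]. Qed.
Lemma bilinZr r x y : t x (r *: y) = r *: t x y. Proof. by case: bt => _ [_ []]. Qed.
Lemma bilin0l y : t 0 y = 0. Proof. exact: addf0 (fun x x' => bilinDl x x' y). Qed.
Lemma bilin0r x : t x 0 = 0. Proof. exact: addf0 (bilinDr x). Qed.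
Lemma bilinNl x y : t (- x) y = - t x y. Proof. exact: (addfN (fun x x' => bilinDl x x' y) x). Qed.
Lemma bilinNr x y : t x (- y) = - t x y. Proof. exact: (addfN (bilinDr x) y). Qed.
Lemma bilinMnl x y n : t (x *+ n) y = t x y *+ n.
Proof. exact: (addfMn (fun x x' => bilinDl x x' y) x n). Qed.
Lemma bilinMnr x y n : t x (y *+ n) = t x y *+ n. Proof. exact: (addfMn (bilinDr x) y n). Qed.

Lemma bilin_swap : Rbilin (fun y x => t x y).
Proof. by split; [|split; [|split]] => *; rewrite ?(bilinDl, bilinDr, bilinZl, bilinZr). Qed.

End Bilinear.

Ltac bilin_expand bt := rewrite ?(bilinDl bt, bilinDr bt, bilinNl bt, bilinNr bt,
  bilinZl bt, bilinZr bt, bilinMnl bt, bilinMnr bt, bilin0l bt, bilin0r bt).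

(* The R-module Hom_Z(R, V) of additive maps, with (r f)(s) = f (s r).  It
   turns R-balanced biadditive maps into V into R-bilinear maps, to which the
   universal property of the tensor product applies. *)
Section AdditiveHom.
Variable V : zmodType.

Record addhom := AddHom {
  addhom_fun :> Rg -> V;
  addhomD : forall r s, addhom_fun (r + s) = addhom_fun r + addhom_fun s }.

Lemma addhom_ext (f g : addhom) : f =1 g -> f = g.
Proof.
case: f g => f fD [g gD] /= /funext eq_fg; subst g.
by congr AddHom; exact: Prop_irrelevance.
Qed.

HB.instance Definition _ := gen_eqMixin addhom.
HB.instance Definition _ := gen_choiceMixin addhom.

Program Definition addhom0 := @AddHom (fun _ => 0) _.
Next Obligation. by rewrite addr0. Qed.
Program Definition addhom_opp (f : addhom) := @AddHom (fun r => - f r) _.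
Next Obligation. by rewrite addhomD opprD. Qed.
Program Definition addhom_add (f g : addhom) := @AddHom (fun r => f r + g r) _.
Next Obligation. by rewrite !addhomD addrACA. Qed.
Program Definition addhom_scale (s : Rg) (f : addhom) := @AddHom (fun r => f (r * s)) _.
Next Obligation. by rewrite mulrDl addhomD. Qed.

Lemma addhom_addA : associative addhom_add.
Proof. by move=> f g h; apply: addhom_ext => r /=; rewrite addrA. Qed.
Lemma addhom_addC : commutative addhom_add.
Proof. by move=> f g; apply: addhom_ext => r /=; rewrite addrC. Qed.
Lemma addhom_add0 : left_id addhom0 addhom_add.
Proof. by move=> f; apply: addhom_ext => r /=; rewrite add0r. Qed.
Lemma addhom_addN : left_inverse addhom0 addhom_opp addhom_add.
Proof. by move=> f; apply: addhom_ext => r /=; rewrite addNr. Qed.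
HB.instance Definition _ :=
  GRing.isZmodule.Build addhom addhom_addA addhom_addC addhom_add0 addhom_addN.

Lemma addhom_scaleA a b f : addhom_scale a (addhom_scale b f) = addhom_scale (a * b) f.
Proof. by apply: addhom_ext => r /=; rewrite mulrA. Qed.
Lemma addhom_scale1 : left_id 1 addhom_scale.
Proof. by move=> f; apply: addhom_ext => r /=; rewrite mulr1. Qed.
Lemma addhom_scaleDr : right_distributive addhom_scale +%R.
Proof. by move=> a f g; apply: addhom_ext. Qed.
Lemma addhom_scaleDl f : {morph addhom_scale^~ f : a b / a + b}.
Proof. by move=> a b; apply: addhom_ext => r /=; rewrite mulrDr addhomD. Qed.
HB.instance Definition _ := GRing.Zmodule_isLmodule.Build Rg addhom
  addhom_scaleA addhom_scale1 addhom_scaleDr addhom_scaleDl.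

End AdditiveHom.

Section TensorUniversal.
Variables (M N T : lmodType Rg) (t : M -> N -> T).
Hypothesis ist : is_tensor t.

Lemma tensor_lift_uniq (P : lmodType Rg) (f g : T -> P) :
    Rlin f -> Rlin g -> (forall x y, f (t x y) = g (t x y)) -> f =1 g.
Proof.
move=> lf lg fg z; pose b x y := g (t x y).
have bb : Rbilin b.
  by case: ist.1 => D1 [D2 [Z1 Z2]]; split; [|split; [|split]] => *;
    rewrite /b ?(D1, D2, Z1, Z2) ?(RlinD lg, RlinZ lg).
have [k [_ uniq_k]] := ist.2 P b bb.
by rewrite -(uniq_k f (conj lf fg)) -(uniq_k g (conj lg (fun _ _ => erefl))).
Qed.

Lemma tensor_additive_eq0 (V : zmodType) (D : T -> V) :
    (forall z z', D (z + z') = D z + D z') -> (forall x y, D (t x y) = 0) ->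
  forall z, D z = 0.
Proof.
move=> DD D0 z.
have FD u r r' : D ((r + r') *: u) = D (r *: u) + D (r' *: u) by rewrite scalerDl DD.
pose F u : addhom V := AddHom (FD u).
have lF : Rlin F by move=> r u v; apply: addhom_ext => s /=; rewrite scalerDr DD scalerA.
have l0 : Rlin (fun _ : T => 0 : addhom V) by move=> r u v; rewrite scaler0 addr0.
have F0 x y : F (t x y) = 0.
  by apply: addhom_ext => s /=; rewrite -(bilinZl ist.1) D0.
by have /(congr1 (fun f : addhom V => f 1)) := tensor_lift_uniq lF l0 F0 z; rewrite /= scale1r.
Qed.

Lemma tensor_additive_ext (V : zmodType) (f g : T -> V) :
    (forall z z', f (z + z') = f z + f z') -> (forall z z', g (z + z') = g z + g z') ->
    (forall x y, f (t x y) = g (t x y)) ->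
  forall z, f z = g z.
Proof.
move=> fD gD fg z; apply/eqP; rewrite -subr_eq0; apply/eqP; move: z.
apply: tensor_additive_eq0 => [z z'|x y]; last by rewrite fg subrr.
by rewrite fD gD opprD addrACA.
Qed.

End TensorUniversal.

Lemma tensor2_additive_ext (M N P T1 T2 : lmodType Rg) (t1 : M -> N -> T1)
    (t2 : T1 -> P -> T2) (V : zmodType) (f g : T2 -> V) :
    is_tensor t1 -> is_tensor t2 ->
    (forall w w', f (w + w') = f w + f w') -> (forall w w', g (w + w') = g w + g w') ->
    (forall x y z, f (t2 (t1 x y) z) = g (t2 (t1 x y) z)) ->
  forall w, f w = g w.
Proof.
move=> ist1 ist2 fD gD fg; apply: (tensor_additive_ext ist2) => // u z; move: u.
apply: (tensor_additive_ext ist1 (f := fun u => f (t2 u z)) (g := fun u => g (t2 u z))) => //.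
  by move=> u u' /=; rewrite (bilinDl ist2.1) fD.
by move=> u u' /=; rewrite (bilinDl ist2.1) gD.
Qed.

Section TensorFormulas.
Variables (M N T : lmodType Rg) (sM : gstr M) (sN : gstr N) (t : M -> N -> T).

Definition tensQ (i : nat) (x : M) (y : N) : T :=
  match i with
  | 0 => t (Q0 sM x) (Q0 sN y) + t (Q1 sM x) (Q2 sN y) *+ 2 + t (Q2 sM x) (Q1 sN y) *+ 2
  | 1 => t (Q0 sM x) (Q1 sN y) + t (Q1 sM x) (Q0 sN y)
         + aR *: t (Q1 sM x) (Q2 sN y) + aR *: t (Q2 sM x) (Q1 sN y)
         + t (Q2 sM x) (Q2 sN y) *+ 2
  | _ => t (Q0 sM x) (Q2 sN y) + t (Q2 sM x) (Q0 sN y)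
         + t (Q1 sM x) (Q1 sN y) + aR *: t (Q2 sM x) (Q2 sN y)
  end.

Lemma tensor_gstrE (sT : gstr T) : tensor_gstr sM sN sT t ->
  [/\ forall x y, Q0 sT (t x y) = tensQ 0 x y,
      forall x y, Q1 sT (t x y) = tensQ 1 x y
    & forall x y, Q2 sT (t x y) = tensQ 2 x y].
Proof. by move=> HT; split=> x y; case: (HT x y). Qed.

Hypothesis bt : Rbilin t.

Ltac tensor_expand :=
  rewrite /tensQ ?(Q0D, Q1D, Q2D, Q0N, Q1N, Q2N, Q0Mn, Q1Mn, Q2Mn, Q0a, Q1a, Q2a);
  bilin_expand bt.

Lemma tensQDl i x x' y : tensQ i (x + x') y = tensQ i x y + tensQ i x' y.
Proof. by case: i => [|[|i]]; tensor_expand; lcomb. Qed.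

Lemma tensQDr i x y y' : tensQ i x (y + y') = tensQ i x y + tensQ i x y'.
Proof. by case: i => [|[|i]]; tensor_expand; lcomb. Qed.

Lemma tensQ_balanced i x y : tensQ i (aR *: x) y = tensQ i x (aR *: y).
Proof. by case: i => [|[|i]]; tensor_expand; lcomb. Qed.

Lemma tensQ0_scale x y :
  tensQ 0 (aR *: x) y = aR ^+ 2 *: tensQ 0 x y - (aR *: tensQ 1 x y) *+ 2 + tensQ 2 x y *+ 6.
Proof. tensor_expand; lcomb. Qed.

Lemma tensQ1_scale x y : tensQ 1 (aR *: x) y = tensQ 0 x y *+ 3 + aR *: tensQ 2 x y.
Proof. tensor_expand; lcomb. Qed.

Lemma tensQ2_scale x y : tensQ 2 (aR *: x) y = - (aR *: tensQ 0 x y) + tensQ 1 x y *+ 3.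
Proof. tensor_expand; lcomb. Qed.

End TensorFormulas.

Section BalancedLift.
Variables (M N T : lmodType Rg) (t : M -> N -> T) (V : zmodType) (F : M -> N -> V).
Hypotheses (FDl : forall x x' y, F (x + x') y = F x y + F x' y)
  (FDr : forall x y y', F x (y + y') = F x y + F x y')
  (F_balanced : forall x y, F (aR *: x) y = F x (aR *: y)).

Lemma balancedZ r x y : F (r *: x) y = F x (r *: y).
Proof.
have intZ (W : lmodType Rg) c (w : W) : (c%:P : Rg) *: w = w *~ c.
  by rewrite -[c in c%:P]intz rmorph_int scaler_int.
elim/poly_ind: r x y => [|p c IHp] x y.
  by rewrite !scale0r (addf0 (fun x x' => FDl x x' y)) (addf0 (FDr x)).
rewrite !scalerDl !intZ FDl FDr (addfMz (fun x x' => FDl x x' y)) (addfMz (FDr x)).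
by rewrite -!scalerA IHp F_balanced !scalerA mulrC.
Qed.

Lemma tensor_balanced_lift : is_tensor t ->
  exists Q : T -> V, (forall z z', Q (z + z') = Q z + Q z') /\ forall x y, Q (t x y) = F x y.
Proof.
move=> ist.
have FD x y r r' : F ((r + r') *: x) y = F (r *: x) y + F (r' *: x) y by rewrite scalerDl FDl.
pose b x y : addhom V := AddHom (FD x y).
have bb : Rbilin b.
  split; [|split; [|split]] => *; apply: addhom_ext => r /=.
  - by rewrite scalerDr FDl.
  - by rewrite FDr.
  - by rewrite scalerA.
  - by rewrite -balancedZ !scalerA mulrC.
have [f [[lf fb] _]] := ist.2 _ b bb.
by exists (fun z => f z 1); split => [z z'|x y]; rewrite ?(RlinD lf) ?fb /= ?scale1r.
Qed.

End BalancedLift.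

Section TensorOperators.
Variables (M N T : lmodType Rg) (sM : gstr M) (sN : gstr N) (t : M -> N -> T).
Hypothesis ist : is_tensor t.
Variables q0 q1 q2 : T -> T.
Hypotheses (q0D : forall z z', q0 (z + z') = q0 z + q0 z')
  (q1D : forall z z', q1 (z + z') = q1 z + q1 z')
  (q2D : forall z z', q2 (z + z') = q2 z + q2 z').
Hypotheses (q0t : forall x y, q0 (t x y) = tensQ sM sN t 0 x y)
  (q1t : forall x y, q1 (t x y) = tensQ sM sN t 1 x y)
  (q2t : forall x y, q2 (t x y) = tensQ sM sN t 2 x y).

Let bt := ist.1.
Let q0N := addfN q0D. Let q1N := addfN q1D. Let q2N := addfN q2D.
Let q0Mn := addfMn q0D. Let q1Mn := addfMn q1D. Let q2Mn := addfMn q2D.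

Ltac additivity := move=> z z' /=;
  rewrite ?(scalerDr, q0D, q1D, q2D, q0N, q1N, q2N, q0Mn, q1Mn, q2Mn); lcomb.

Lemma tensor_op0_scale m : q0 (aR *: m) = aR ^+ 2 *: q0 m - (aR *: q1 m) *+ 2 + q2 m *+ 6.
Proof.
move: m; apply: (tensor_additive_ext ist); try additivity.
by move=> x y /=; rewrite -(bilinZl bt) !(q0t, q1t, q2t) tensQ0_scale.
Qed.

Lemma tensor_op1_scale m : q1 (aR *: m) = q0 m *+ 3 + aR *: q2 m.
Proof.
move: m; apply: (tensor_additive_ext ist); try additivity.
by move=> x y /=; rewrite -(bilinZl bt) !(q0t, q1t, q2t) tensQ1_scale.
Qed.

Lemma tensor_op2_scale m : q2 (aR *: m) = - (aR *: q0 m) + q1 m *+ 3.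
Proof.
move: m; apply: (tensor_additive_ext ist); try additivity.
by move=> x y /=; rewrite -(bilinZl bt) !(q0t, q1t, q2t) tensQ2_scale.
Qed.

Ltac op_expand :=
  rewrite ?(q0t, q1t, q2t) /tensQ
    ?(q0D, q1D, q2D, q0N, q1N, q2N, q0Mn, q1Mn, q2Mn,
      tensor_op0_scale, tensor_op1_scale, tensor_op2_scale, q0t, q1t, q2t) /tensQ
    ?(Q0D, Q1D, Q2D, Q0N, Q1N, Q2N, Q0Mn, Q1Mn, Q2Mn, Q00, Q10, Q20,
      Q0a, Q1a, Q2a, adem1, adem2);
  bilin_expand bt.

Lemma tensor_op_adem1 m : q1 (q0 m) = q2 (q1 m) *+ 2 - q0 (q2 m) *+ 2.
Proof.
move: m; apply: (tensor_additive_ext ist); try additivity.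
by move=> x y /=; op_expand; lcomb.
Qed.

Lemma tensor_op_adem2 m : q2 (q0 m) = q0 (q1 m) + aR *: q0 (q2 m) - q1 (q2 m) *+ 2.
Proof.
move: m; apply: (tensor_additive_ext ist); try additivity.
by move=> x y /=; op_expand; lcomb.
Qed.

Lemma tensor_op_Psi x y :
  q0 (q0 (t x y)) + aR *: q0 (q1 (t x y)) - q1 (q1 (t x y)) *+ 2
  + aR ^+ 2 *: q0 (q2 (t x y)) - (aR *: q1 (q2 (t x y))) *+ 2
  + q2 (q2 (t x y)) *+ 4 = t (Psi sM x) (Psi sN y).
Proof. rewrite /Psi; op_expand; lcomb. Qed.

End TensorOperators.

Section TensorStructure.
Variables (M N T : lmodType Rg) (sM : gstr M) (sN : gstr N) (sT sT' : gstr T).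
Variable t : M -> N -> T.
Hypothesis ist : is_tensor t.

Lemma tensor_gstr_exists : exists sT : gstr T, tensor_gstr sM sN sT t.
Proof.
have lift i := tensor_balanced_lift (tensQDl sM sN ist.1 i) (tensQDr sM sN ist.1 i)
  (tensQ_balanced sM sN ist.1 i) ist.
have [q0 [q0D q0t]] := lift 0%N; have [q1 [q1D q1t]] := lift 1%N.
have [q2 [q2D q2t]] := lift 2%N.
pose s := GStr q0D q1D q2D
  (tensor_op0_scale ist q0D q1D q2D q0t q1t q2t)
  (tensor_op1_scale ist q0D q1D q2D q0t q1t q2t)
  (tensor_op2_scale ist q0D q1D q2D q0t q1t q2t)
  (tensor_op_adem1 ist q0D q1D q2D q0t q1t q2t)
  (tensor_op_adem2 ist q0D q1D q2D q0t q1t q2t).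
by exists s => x y; split; rewrite /= ?(q0t, q1t, q2t).
Qed.

Lemma tensor_gstr_uniq :
  tensor_gstr sM sN sT t -> tensor_gstr sM sN sT' t -> same_gstr sT' sT.
Proof.
move=> /tensor_gstrE[E0 E1 E2] /tensor_gstrE[E0' E1' E2'] m.
by split; move: m; apply: (tensor_additive_ext ist) => *;
  rewrite ?(Q0D, Q1D, Q2D, E0, E1, E2, E0', E1', E2').
Qed.

Lemma Psi_tensor : tensor_gstr sM sN sT t ->
  forall x y, Psi sT (t x y) = t (Psi sM x) (Psi sN y).
Proof.
move=> /tensor_gstrE[E0 E1 E2] x y.
exact: (tensor_op_Psi ist (Q0D sT) (Q1D sT) (Q2D sT) E0 E1 E2).
Qed.

End TensorStructure.

Definition comm_coef (i j : nat) : Rg :=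
  match i, j with
  | 0, 0 => aR ^+ 2 | 0, 1 => - aR *+ 2 | 0, _ => 6%:R
  | 1, 0 => 3%:R | 1, 1 => 0 | 1, _ => aR
  | _, 0 => - aR | _, 1 => 3%:R | _, _ => 0
  end.

Definition comm_mx : 'M[Rg]_3 := \matrix_(i, j) comm_coef i j.

Lemma comm_mx_commr : commr_rmorph ( *~%R (1 : 'M[Rg]_3)) comm_mx.
Proof. by move=> z; apply: commr_int. Qed.

(* The standard structure on R: (Q_0 p, Q_1 p, Q_2 p) is the first column of
   p evaluated at the matrix C of the commutation relations, so that
   Q (a p) = C Q(p) and Q(1) = (1, 0, 0). *)
Definition unitQ (i : nat) (p : Rg) : Rg := horner_morph comm_mx_commr p (inord i) 0.

Lemma unitQD i p q : unitQ i (p + q) = unitQ i p + unitQ i q.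
Proof. by rewrite /unitQ rmorphD mxE. Qed.

Lemma unitQ1 i : (i < 3)%N -> unitQ i 1 = (i == 0)%N%:R.
Proof. by move=> lt_i3; rewrite /unitQ rmorph1 mxE -val_eqE /= inordK. Qed.

Lemma unitQ_aX i p : (i < 3)%N ->
  unitQ i (aR * p) = \sum_(j < 3) comm_coef i j * unitQ j p.
Proof.
move=> lt_i3; rewrite /unitQ rmorphM /= horner_morphX -mulmxE mxE.
by apply: eq_bigr => j _; rewrite !mxE inordK // inord_val.
Qed.

Lemma unitQ0_aX p :
  unitQ 0 (aR * p) = aR ^+ 2 * unitQ 0 p - (aR * unitQ 1 p) *+ 2 + unitQ 2 p *+ 6.
Proof. by rewrite unitQ_aX // !big_ord_recl big_ord0 /=; ring. Qed.

Lemma unitQ1_aX p : unitQ 1 (aR * p) = unitQ 0 p *+ 3 + aR * unitQ 2 p.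
Proof. by rewrite unitQ_aX // !big_ord_recl big_ord0 /=; ring. Qed.

Lemma unitQ2_aX p : unitQ 2 (aR * p) = - (aR * unitQ 0 p) + unitQ 1 p *+ 3.
Proof. by rewrite unitQ_aX // !big_ord_recl big_ord0 /=; ring. Qed.

Lemma poly_additive_eq0 (A : Rg -> Rg) :
    (forall p q, A (p + q) = A p + A q) -> A 1 = 0 ->
    (forall p, A (aR * p) = aR * A p) ->
  forall p, A p = 0.
Proof.
move=> AD A1 AX; elim/poly_ind => [|p c IHp]; first exact: addf0.
rewrite AD -[c in c%:P]intz rmorph_int (addfMz AD) A1 mul0rz addr0 mulrC.
by rewrite [in LHS](_ : 'X = aR) // AX IHp mulr0.
Qed.

Lemma unitQ0 i : unitQ i 0 = 0. Proof. exact: addf0 (@unitQD i). Qed.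
Lemma unitQN i p : unitQ i (- p) = - unitQ i p. Proof. exact: (addfN (@unitQD i) p). Qed.
Lemma unitQMn i p n : unitQ i (p *+ n) = unitQ i p *+ n.
Proof. exact: (addfMn (@unitQD i) p n). Qed.

Lemma unitQ_aX2 i p : unitQ i (aR ^+ 2 * p) = unitQ i (aR * (aR * p)).
Proof. by rewrite mulrA -expr2. Qed.

Ltac unitQ_expand :=
  rewrite ?(unitQD, unitQN, unitQMn, unitQ0, unitQ0_aX, unitQ1_aX, unitQ2_aX);
  rewrite ?(unitQD, unitQN, unitQMn, unitQ0, unitQ_aX2, unitQ0_aX, unitQ1_aX, unitQ2_aX).

(* Both Adem relations hold on R: their defects are additive, vanish at 1 and
   commute with multiplication by a. *)
Lemma unitQ_adem1 p :
  unitQ 1 (unitQ 0 p) = unitQ 2 (unitQ 1 p) *+ 2 - unitQ 0 (unitQ 2 p) *+ 2.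
Proof.
apply/eqP; rewrite -subr_eq0; apply/eqP; move: p; apply: poly_additive_eq0.
- by move=> p q; unitQ_expand; ring.
- by rewrite !unitQ1 //= !unitQ0; ring.
- by move=> p; unitQ_expand; ring.
Qed.

Lemma unitQ_adem2 p :
  unitQ 2 (unitQ 0 p) = unitQ 0 (unitQ 1 p) + aR * unitQ 0 (unitQ 2 p) - unitQ 1 (unitQ 2 p) *+ 2.
Proof.
apply/eqP; rewrite -subr_eq0; apply/eqP; move: p; apply: poly_additive_eq0.
- by move=> p q; unitQ_expand; ring.
- by rewrite !unitQ1 //= !unitQ0; ring.
- by move=> p; unitQ_expand; ring.
Qed.

Lemma std_unit_exists : exists sR : gstr Rg^o, std_unit sR.
Proof.
exists (@GStr Rg^o (unitQ 0) (unitQ 1) (unitQ 2) (@unitQD 0) (@unitQD 1) (@unitQD 2)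
  unitQ0_aX unitQ1_aX unitQ2_aX unitQ_adem1 unitQ_adem2).
by split; rewrite /= unitQ1.
Qed.

Lemma gmapE (M N : lmodType Rg) (sM : gstr M) (sN : gstr N) (f : M -> N) : gmap sM sN f ->
  [/\ forall m, f (Q0 sM m) = Q0 sN (f m), forall m, f (Q1 sM m) = Q1 sN (f m)
    & forall m, f (Q2 sM m) = Q2 sN (f m)].
Proof. by move=> [_ fQ]; split=> m; case: (fQ m). Qed.

Section GammaMapOnTensors.
Variables (M N T T' : lmodType Rg) (t : M -> N -> T) (sT : gstr T) (sT' : gstr T') (h : T -> T').
Hypotheses (ist : is_tensor t) (lh : Rlin h).

Lemma gmap_tensor :
    (forall x y, [/\ h (Q0 sT (t x y)) = Q0 sT' (h (t x y)),
                     h (Q1 sT (t x y)) = Q1 sT' (h (t x y))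
                   & h (Q2 sT (t x y)) = Q2 sT' (h (t x y))]) ->
  gmap sT sT' h.
Proof.
move=> hQ; split=> // m; split; move: m; apply: (tensor_additive_ext ist) => [z z'|z z'|x y];
  rewrite ?(Q0D, Q1D, Q2D, RlinD lh) //; by case: (hQ x y).
Qed.

End GammaMapOnTensors.

Lemma tensor_map_gmap (M M' N N' T T' : lmodType Rg) (sM : gstr M) (sM' : gstr M')
    (sN : gstr N) (sN' : gstr N') (sT : gstr T) (sT' : gstr T')
    (t : M -> N -> T) (t' : M' -> N' -> T') (f : M -> M') (g : N -> N') (h : T -> T') :
    is_tensor t -> tensor_gstr sM sN sT t -> tensor_gstr sM' sN' sT' t' ->
    gmap sM sM' f -> gmap sN sN' g ->
    Rlin h -> (forall x y, h (t x y) = t' (f x) (g y)) ->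
  gmap sT sT' h.
Proof.
move=> ist /tensor_gstrE[E0 E1 E2] /tensor_gstrE[E0' E1' E2'].
move=> /gmapE[f0 f1 f2] /gmapE[g0 g1 g2] lh ht.
apply: (gmap_tensor ist lh) => x y.
by split; rewrite ?(E0, E1, E2) ht ?(E0', E1', E2') /tensQ; Rlin_expand lh;
  rewrite !ht ?(f0, f1, f2, g0, g1, g2).
Qed.

Section Braiding.
Variables (M N T T' : lmodType Rg) (sM : gstr M) (sN : gstr N) (sT : gstr T) (sT' : gstr T').
Variables (t : M -> N -> T) (t' : N -> M -> T') (h : T -> T').
Hypotheses (ist : is_tensor t) (ist' : is_tensor t') (lh : Rlin h)
  (ht : forall x y, h (t x y) = t' y x).

Lemma tensor_comm_bij : bijective h.
Proof.
have [k [[lk kt] _]] := ist'.2 _ _ (bilin_swap ist.1).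
exists k.
  apply: (tensor_additive_ext ist) => [z z'|z z'|x y] /=; rewrite ?(RlinD lh, RlinD lk) //.
  by rewrite ht kt.
apply: (tensor_additive_ext ist') => [z z'|z z'|x y] /=; rewrite ?(RlinD lh, RlinD lk) //.
by rewrite kt ht.
Qed.

Lemma tensor_comm_gmap :
  tensor_gstr sM sN sT t -> tensor_gstr sN sM sT' t' -> gmap sT sT' h.
Proof.
move=> /tensor_gstrE[E0 E1 E2] /tensor_gstrE[E0' E1' E2'].
apply: (gmap_tensor ist lh) => x y.
by split; rewrite ?(E0, E1, E2) ht ?(E0', E1', E2') /tensQ; Rlin_expand lh; rewrite !ht; lcomb.
Qed.

End Braiding.

Section LeftUnitor.
Variables (M T : lmodType Rg) (sR : gstr Rg^o) (sM : gstr M) (sT : gstr T).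
Variables (t : Rg^o -> M -> T) (h : T -> M).
Hypotheses (ist : is_tensor t) (lh : Rlin h) (ht : forall (r : Rg^o) x, h (t r x) = r *: x).

Lemma tensor_unitl_scale (r : Rg^o) x : t r x = t 1 (r *: x).
Proof. by rewrite (bilinZr ist.1) -(bilinZl ist.1) [r *: 1]mulr1. Qed.

Lemma tensor_unitl_bij : bijective h.
Proof.
exists (t 1); last by move=> x; rewrite ht scale1r.
apply: (tensor_additive_ext ist) => [z z'|z z'|r x] /=; rewrite ?(RlinD lh) //.
  by rewrite (bilinDr ist.1).
by rewrite ht -tensor_unitl_scale.
Qed.

Lemma tensor_unitl_gmap :
  std_unit sR -> tensor_gstr sR sM sT t -> gmap sT sM h.
Proof.
move=> [u0 u1 u2] /tensor_gstrE[E0 E1 E2].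
apply: (gmap_tensor ist lh) => r x; rewrite tensor_unitl_scale; move: (r *: x) => {r}x.
by split; rewrite ?(E0, E1, E2) /tensQ u0 u1 u2; bilin_expand ist.1; Rlin_expand lh;
  rewrite !ht !scale1r; lcomb.
Qed.

End LeftUnitor.

Section RightUnitor.
Variables (M T : lmodType Rg) (sR : gstr Rg^o) (sM : gstr M) (sT : gstr T).
Variables (t : M -> Rg^o -> T) (h : T -> M).
Hypotheses (ist : is_tensor t) (lh : Rlin h) (ht : forall x (r : Rg^o), h (t x r) = r *: x).

Lemma tensor_unitr_scale x (r : Rg^o) : t x r = t (r *: x) 1.
Proof. by rewrite (bilinZl ist.1) -(bilinZr ist.1) [r *: 1]mulr1. Qed.

Lemma tensor_unitr_bij : bijective h.
Proof.
exists (t^~ 1); last by move=> x; rewrite ht scale1r.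
apply: (tensor_additive_ext ist) => [z z'|z z'|x r] /=; rewrite ?(RlinD lh) //.
  by rewrite (bilinDl ist.1).
by rewrite ht -tensor_unitr_scale.
Qed.

Lemma tensor_unitr_gmap :
  std_unit sR -> tensor_gstr sM sR sT t -> gmap sT sM h.
Proof.
move=> [u0 u1 u2] /tensor_gstrE[E0 E1 E2].
apply: (gmap_tensor ist lh) => x r; rewrite tensor_unitr_scale; move: (r *: x) => {r}x.
by split; rewrite ?(E0, E1, E2) /tensQ u0 u1 u2; bilin_expand ist.1; Rlin_expand lh;
  rewrite !ht !scale1r; lcomb.
Qed.

End RightUnitor.

Section Associator.
Variables (M N P T1 T2 T3 T4 : lmodType Rg) (sM : gstr M) (sN : gstr N) (sP : gstr P).
Variables (sT1 : gstr T1) (sT2 : gstr T2) (sT3 : gstr T3) (sT4 : gstr T4).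
Variables (t1 : M -> N -> T1) (t2 : T1 -> P -> T2) (t3 : N -> P -> T3) (t4 : M -> T3 -> T4).
Variable h : T2 -> T4.
Hypotheses (ist1 : is_tensor t1) (ist2 : is_tensor t2) (ist3 : is_tensor t3)
  (ist4 : is_tensor t4) (lh : Rlin h)
  (ht : forall x y z, h (t2 (t1 x y) z) = t4 x (t3 y z)).

Lemma tensor_assoc_inverse :
  exists k : T4 -> T2, Rlin k /\ forall x y z, k (t4 x (t3 y z)) = t2 (t1 x y) z.
Proof.
have b1 := ist1.1; have b2 := ist2.1.
have bx x : Rbilin (fun y z => t2 (t1 x y) z).
  by split; [|split; [|split]] => *; rewrite ?(bilinDr b1, bilinDl b2, bilinDr b2,
    bilinZr b1, bilinZl b2, bilinZr b2).
have [G GP] := @choice M (T3 -> T2)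
  (fun x g => Rlin g /\ forall y z, g (t3 y z) = t2 (t1 x y) z)
  (fun x => let: ex_intro g (conj gP _) := ist3.2 _ _ (bx x) in ex_intro _ g gP).
have lG x := (GP x).1; have Gt x := (GP x).2.
have bG : Rbilin G.
  split; [|split; [|split]] => [x x'|x w w'|r x|r x w]; rewrite ?(RlinD (lG x), RlinZ (lG x)) //.
    apply: (tensor_additive_ext ist3) => [w w'|w w'|y z] /=.
    - exact: (RlinD (lG _)).
    - by rewrite (RlinD (lG x)) (RlinD (lG x')) addrACA.
    - by rewrite !Gt (bilinDl b1) (bilinDl b2).
  apply: (tensor_additive_ext ist3) => [w w'|w w'|y z] /=.
  - exact: (RlinD (lG _)).
  - by rewrite (RlinD (lG x)) scalerDr.
  - by rewrite !Gt (bilinZl b1) (bilinZl b2).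
have [k [[lk kt] _]] := ist4.2 _ _ bG.
by exists k; split => // x y z; rewrite kt Gt.
Qed.

Lemma tensor_assoc_bij : bijective h.
Proof.
have [k [lk kt]] := tensor_assoc_inverse.
exists k.
  apply: (tensor2_additive_ext ist1 ist2) => [w w'|w w'|x y z] /=; rewrite ?(RlinD lh, RlinD lk) //.
  by rewrite ht kt.
apply: (tensor_additive_ext ist4) => [w w'|w w'|x u] /=; rewrite ?(RlinD lh, RlinD lk) //.
move: u; apply: (tensor_additive_ext ist3) => [w w'|w w'|y z] /=.
- by rewrite (bilinDr ist4.1) (RlinD lk) (RlinD lh).
- by rewrite (bilinDr ist4.1).
by rewrite kt ht.
Qed.

Lemma tensor_assoc_gmap :
    tensor_gstr sM sN sT1 t1 -> tensor_gstr sT1 sP sT2 t2 ->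
    tensor_gstr sN sP sT3 t3 -> tensor_gstr sM sT3 sT4 t4 ->
  gmap sT2 sT4 h.
Proof.
move=> /tensor_gstrE[E1_0 E1_1 E1_2] /tensor_gstrE[E2_0 E2_1 E2_2].
move=> /tensor_gstrE[E3_0 E3_1 E3_2] /tensor_gstrE[E4_0 E4_1 E4_2].
split=> // m; split; move: m; apply: (tensor2_additive_ext ist1 ist2) => [w w'|w w'|x y z];
  rewrite ?(Q0D, Q1D, Q2D, RlinD lh) //.
all: rewrite ?(E2_0, E2_1, E2_2) ht ?(E4_0, E4_1, E4_2) /tensQ
  ?(E1_0, E1_1, E1_2, E3_0, E3_1, E3_2) /tensQ.
all: bilin_expand ist1.1; bilin_expand ist2.1; bilin_expand ist4.1.
all: by Rlin_expand lh; rewrite ?ht; lcomb.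
Qed.

End Associator.

Theorem mainTheorem3 :
  (* (1) the tensor product carries a unique Gamma-structure given by the formulas *)
  (forall (M N T : lmodType Rg) (sM : gstr M) (sN : gstr N) (t : M -> N -> T),
     is_tensor t ->
     exists sT : gstr T, tensor_gstr sM sN sT t /\
       forall sT' : gstr T, tensor_gstr sM sN sT' t -> same_gstr sT' sT)
  /\
  (* (2) the unit object: the standard Gamma-structure on R exists *)
  (exists sR : gstr Rg^o, std_unit sR)
  /\
  (* (3) functoriality: f (x) g is a Gamma-map for Gamma-maps f, g *)
  (forall (M M' N N' T T' : lmodType Rg) (sM : gstr M) (sM' : gstr M')
     (sN : gstr N) (sN' : gstr N') (sT : gstr T) (sT' : gstr T')
     (t : M -> N -> T) (t' : M' -> N' -> T') (f : M -> M') (g : N -> N')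
     (h : T -> T'),
     is_tensor t -> is_tensor t' ->
     tensor_gstr sM sN sT t -> tensor_gstr sM' sN' sT' t' ->
     gmap sM sM' f -> gmap sN sN' g ->
     Rlin h -> (forall x y, h (t x y) = t' (f x) (g y)) ->
     gmap sT sT' h)
  /\
  (* (4) associator (M (x) N) (x) P -> M (x) (N (x) P) is a Gamma-isomorphism *)
  (forall (M N P T1 T2 T3 T4 : lmodType Rg) (sM : gstr M) (sN : gstr N)
     (sP : gstr P) (sT1 : gstr T1) (sT2 : gstr T2) (sT3 : gstr T3)
     (sT4 : gstr T4) (t1 : M -> N -> T1) (t2 : T1 -> P -> T2)
     (t3 : N -> P -> T3) (t4 : M -> T3 -> T4) (h : T2 -> T4),
     is_tensor t1 -> is_tensor t2 -> is_tensor t3 -> is_tensor t4 ->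
     tensor_gstr sM sN sT1 t1 -> tensor_gstr sT1 sP sT2 t2 ->
     tensor_gstr sN sP sT3 t3 -> tensor_gstr sM sT3 sT4 t4 ->
     Rlin h -> (forall x y z, h (t2 (t1 x y) z) = t4 x (t3 y z)) ->
     gmap sT2 sT4 h /\ bijective h)
  /\
  (* (5) left unitor R (x) M -> M is a Gamma-isomorphism *)
  (forall (M T : lmodType Rg) (sR : gstr Rg^o) (sM : gstr M) (sT : gstr T)
     (t : Rg^o -> M -> T) (h : T -> M),
     std_unit sR -> is_tensor t -> tensor_gstr sR sM sT t ->
     Rlin h -> (forall (r : Rg^o) x, h (t r x) = r *: x) ->
     gmap sT sM h /\ bijective h)
  /\
  (* (6) right unitor M (x) R -> M is a Gamma-isomorphism *)
  (forall (M T : lmodType Rg) (sR : gstr Rg^o) (sM : gstr M) (sT : gstr T)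
     (t : M -> Rg^o -> T) (h : T -> M),
     std_unit sR -> is_tensor t -> tensor_gstr sM sR sT t ->
     Rlin h -> (forall x (r : Rg^o), h (t x r) = r *: x) ->
     gmap sT sM h /\ bijective h)
  /\
  (* (7) symmetry M (x) N -> N (x) M is a Gamma-isomorphism *)
  (forall (M N T T' : lmodType Rg) (sM : gstr M) (sN : gstr N)
     (sT : gstr T) (sT' : gstr T') (t : M -> N -> T) (t' : N -> M -> T')
     (h : T -> T'),
     is_tensor t -> is_tensor t' ->
     tensor_gstr sM sN sT t -> tensor_gstr sN sM sT' t' ->
     Rlin h -> (forall x y, h (t x y) = t' y x) ->
     gmap sT sT' h /\ bijective h)
  /\
  (* (8) Psi is multiplicative *)
  (forall (M N T : lmodType Rg) (sM : gstr M) (sN : gstr N) (sT : gstr T)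
     (t : M -> N -> T),
     is_tensor t -> tensor_gstr sM sN sT t ->
     forall x y, Psi sT (t x y) = t (Psi sM x) (Psi sN y)).
Proof.
split.
  move=> M N T sM sN t ist; have [sT HT] := tensor_gstr_exists sM sN ist.
  by exists sT; split=> // sT' HT'; exact: tensor_gstr_uniq ist HT HT'.
split; first exact: std_unit_exists.
split.
  move=> M M' N N' T T' sM sM' sN sN' sT sT' t t' f g h ist _ HT HT' fG gG lh ht.
  exact: tensor_map_gmap ist HT HT' fG gG lh ht.
split.
  move=> M N P T1 T2 T3 T4 sM sN sP sT1 sT2 sT3 sT4 t1 t2 t3 t4 h.
  move=> ist1 ist2 ist3 ist4 HT1 HT2 HT3 HT4 lh ht.
  split; first exact: tensor_assoc_gmap ist1 ist2 ist4 lh ht HT1 HT2 HT3 HT4.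
  exact: tensor_assoc_bij ist1 ist2 ist3 ist4 lh ht.
split.
  move=> M T sR sM sT t h unit_sR ist HT lh ht.
  by split; [apply: tensor_unitl_gmap ist lh ht unit_sR HT | apply: tensor_unitl_bij ist lh ht].
split.
  move=> M T sR sM sT t h unit_sR ist HT lh ht.
  by split; [apply: tensor_unitr_gmap ist lh ht unit_sR HT | apply: tensor_unitr_bij ist lh ht].
split.
  move=> M N T T' sM sN sT sT' t t' h ist ist' HT HT' lh ht.
  by split; [apply: tensor_comm_gmap ist lh ht HT HT' | apply: tensor_comm_bij ist ist' lh ht].
move=> M N T sM sN sT t ist HT; exact: Psi_tensor ist HT.
Qed.
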